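(* Let $A, B, K, L, F \in \mathbb{R}^{n\times n}$ with $B$ and $L$ non-singular, and suppose $$\sigma_{\min}(KL^{-1})\,\sigma_{\min}(B^{-1}A) > 1.$$ Then the Sylvester-like absolute value equation $$AXK + B\lvert X\rvert L = F$$ has exactly one solution $X \in \mathbb{R}^{n\times n}$.
   Context: $\sigma_{\min}(\cdot)$ is the smallest singular value and $\lvert X\rvert$ the entrywise absolute value of a matrix $X$. *)

From HB Require Import structures.
From mathcomp Require Import all_boot all_order all_algebra.
From mathcomp Require Import classical_sets reals.
Set Implicit Arguments. Unset Strict Implicit. Unset Printing Implicit Defensive.
Import Order.TTheory GRing.Theory Num.Theory.
Local Open Scope ring_scope.

Definition absmx (R : realType) (m n : nat) (X : 'M[R]_(m, n)) : 'M[R]_(m, n) :=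
  \matrix_(i, j) `|X i j|.

(* Smallest singular value: sigma_min(M) = sqrt(lambda_min(M^T M)),
   lambda_min being the least eigenvalue of the symmetric PSD matrix M^T M
   (all its eigenvalues are real). *)
Definition sigma_min (R : realType) (n : nat) (M : 'M[R]_n) : R :=
  Num.sqrt (inf [set l : R | eigenvalue (M^T *m M) l]%classic).

(* With C := B^-1 A, D := K L^-1 and G := B^-1 F L^-1 the equation reads
   C X D + |X| = G.  Minimizing the Rayleigh quotient |v P|^2 / |v|^2 (Frobenius
   norm) over the compact unit sphere produces an eigenvalue of P P^T, whence
   |C Y D|^2 >= k |Y|^2 with k := (sigma_min(C) sigma_min(D))^2 > 1.  As
   | |X| - |Y| | <= |X - Y|, the map X |-> C X D + |X| is injective and the map
   X |-> C^-1 (G - |X|) D^-1, whose fixed points are the solutions, contracts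
   the Frobenius norm.  Banach's theorem is applied with the max-entry norm of
   matrices, for which a high enough iterate of this map contracts; a fixed point
   of the iterate is fixed by the map itself, fixed points of contractions
   being unique. *)

From HB Require Import structures.
From mathcomp Require Import all_boot all_order all_algebra.
From mathcomp Require Import boolp classical_sets functions reals topology normedtype.
From mathcomp Require Import sequences derive.
From mathcomp Require Import ring lra interval_inference.
Set Implicit Arguments. Unset Strict Implicit. Unset Printing Implicit Defensive.
Import Order.TTheory GRing.Theory Num.Theory.
Import numFieldTopology.Exports numFieldNormedType.Exports.
Local Open Scope ring_scope.

Section Frobenius.
Variable R : realType.

Definition frob2 m n (X : 'M[R]_(m, n)) : R := \sum_i \sum_j X i j ^+ 2.

Lemma frob2_ge0 m n (X : 'M[R]_(m, n)) : 0 <= frob2 X.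
Proof. by apply: sumr_ge0 => i _; apply: sumr_ge0 => j _; exact: sqr_ge0. Qed.

Lemma coef_sqr_le_frob2 m n (X : 'M[R]_(m, n)) i j : X i j ^+ 2 <= frob2 X.
Proof.
rewrite /frob2 (bigD1 i) //= (bigD1 j) //= -addrA lerDl addr_ge0 //.
  by apply: sumr_ge0 => l _; exact: sqr_ge0.
by apply: sumr_ge0 => l _; apply: sumr_ge0 => l' _; exact: sqr_ge0.
Qed.

Lemma frob2_eq0 m n (X : 'M[R]_(m, n)) : (frob2 X == 0) = (X == 0).
Proof.
apply/eqP/eqP => [X0|->]; last first.
  by rewrite /frob2 big1 // => i _; rewrite big1 // => j _; rewrite mxE expr0n.
apply/matrixP => i j; apply/eqP; rewrite mxE -sqrf_eq0 eq_le sqr_ge0 andbT -X0.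
exact: coef_sqr_le_frob2.
Qed.

Lemma frob2_0 m n : frob2 (0 : 'M[R]_(m, n)) = 0.
Proof. by apply/eqP; rewrite frob2_eq0. Qed.

Lemma frob2_gt0 m n (X : 'M[R]_(m, n)) : (0 < frob2 X) = (X != 0).
Proof. by rewrite lt_def frob2_eq0 frob2_ge0 andbT. Qed.

Lemma frob2Z m n a (X : 'M[R]_(m, n)) : frob2 (a *: X) = a ^+ 2 * frob2 X.
Proof.
rewrite /frob2 mulr_sumr; apply: eq_bigr => i _; rewrite mulr_sumr.
by apply: eq_bigr => j _; rewrite mxE exprMn.
Qed.

Lemma frob2N m n (X : 'M[R]_(m, n)) : frob2 (- X) = frob2 X.
Proof. by rewrite -scaleN1r frob2Z sqrrN expr1n mul1r. Qed.

Lemma frob2_tr m n (X : 'M[R]_(m, n)) : frob2 X^T = frob2 X.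
Proof.
by rewrite /frob2 exchange_big; apply: eq_bigr => i _; apply: eq_bigr => j _; rewrite mxE.
Qed.

Lemma frob2_rows m n (X : 'M[R]_(m, n)) : frob2 X = \sum_i frob2 (row i X).
Proof.
by apply: eq_bigr => i _; rewrite /frob2 big_ord1; apply: eq_bigr => j _; rewrite mxE.
Qed.

Lemma frob2_absmxB m n (X Y : 'M[R]_(m, n)) :
  frob2 (absmx X - absmx Y) <= frob2 (X - Y).
Proof.
apply: ler_sum => i _; apply: ler_sum => j _; rewrite !mxE.
rewrite -[_ ^+ 2]real_normK ?num_real // -[(X i j - Y i j) ^+ 2]real_normK ?num_real //.
by rewrite ler_sqr ?nnegrE // ler_dist_dist.
Qed.

Lemma sqr_mx_normr_le_frob2 m n (X : 'M[R]_(m, n)) : `|X| ^+ 2 <= frob2 X.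
Proof.
suff : `|X| <= Num.sqrt (frob2 X).
  by rewrite -ler_sqr ?nnegrE ?sqrtr_ge0 // sqr_sqrtr ?frob2_ge0.
rewrite [leLHS]/Num.Def.normr /= mx_normrE.
apply: bigmax_le => [|[i j] _ /=]; first exact: sqrtr_ge0.
rewrite -ler_sqr ?nnegrE ?sqrtr_ge0 // sqr_sqrtr ?frob2_ge0 //.
by rewrite real_normK ?num_real // coef_sqr_le_frob2.
Qed.

Lemma frob2_le_sqr_mx_normr m n (X : 'M[R]_(m, n)) :
  frob2 X <= (m * n)%:R * `|X| ^+ 2.
Proof.
have coef_le i j : X i j ^+ 2 <= `|X| ^+ 2.
  rewrite -real_normK ?num_real // ler_sqr ?nnegrE //.
  rewrite [leRHS]/Num.Def.normr /= mx_normrE.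
  by apply/bigmax_geP; right; exists (i, j).
apply: le_trans (_ : \sum_(i < m) \sum_(j < n) `|X| ^+ 2 <= _).
  by apply: ler_sum => i _; apply: ler_sum => j _; exact: coef_le.
by rewrite !sumr_const !card_ord -mulrnA mulr_natl mulnC.
Qed.

Definition dotr n (u v : 'rV[R]_n) : R := \sum_j u 0 j * v 0 j.

Lemma frob2_dotr n (u : 'rV[R]_n) : frob2 u = dotr u u.
Proof. by rewrite /frob2 big_ord1; apply: eq_bigr => j _; rewrite expr2. Qed.

Lemma dotrBl n (u v w : 'rV[R]_n) : dotr (u - v) w = dotr u w - dotr v w.
Proof. by rewrite /dotr -sumrB; apply: eq_bigr => j _; rewrite !mxE mulrBl. Qed.

Lemma dotrZl n a (u w : 'rV[R]_n) : dotr (a *: u) w = a * dotr u w.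
Proof. by rewrite /dotr mulr_sumr; apply: eq_bigr => j _; rewrite !mxE mulrA. Qed.

Lemma dotr_mulmx m n (u : 'rV[R]_m) (w : 'rV[R]_n) (M : 'M[R]_(n, m)) :
  dotr u (w *m M) = dotr (u *m M^T) w.
Proof.
rewrite /dotr; under eq_bigr do rewrite mxE mulr_sumr.
rewrite exchange_big; apply: eq_bigr => j _; rewrite mxE mulr_suml.
by apply: eq_bigr => i _; rewrite !mxE; ring.
Qed.

Lemma frob2_row_addZ n t (u w : 'rV[R]_n) :
  frob2 (u + t *: w) = frob2 u + 2 * t * dotr u w + t ^+ 2 * frob2 w.
Proof.
rewrite !frob2_dotr /dotr !mulr_sumr -!big_split.
by apply: eq_bigr => j _; rewrite !mxE /=; ring.
Qed.

End Frobenius.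

Lemma quadratic_ge0_lin_eq0 (R : realFieldType) (b c : R) :
  (forall t, 0 <= 2 * t * b + t ^+ 2 * c) -> b = 0.
Proof.
move=> quad_ge0; pose d := `|c| + 1.
have d_gt0 : 0 < d by rewrite ltr_pwDr.
have c_lt : c < 2 * d by rewrite /d; have := ler_norm c; have := normr_ge0 c; lra.
pose e := b / d; have be : b = e * d by rewrite mulfVK ?gt_eqF.
have := quad_ge0 (- e); rewrite be => h.
have e2_le0 : e ^+ 2 <= 0 by nra.
have : e ^+ 2 == 0 by rewrite eq_le e2_le0 sqr_ge0.
by rewrite sqrf_eq0 => /eqP ->; rewrite mul0r.
Qed.

Section Rayleigh.
Variable R : realType.

Lemma continuous_sum (T : topologicalType) I (r : seq I) (f : I -> T -> R) :
  (forall i, continuous (f i)) -> continuous (fun x => \sum_(i <- r) f i x).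
Proof.
move=> f_cont; elim: r => [|a r IHr].
  by under eq_fun do rewrite big_nil; exact: cst_continuous.
under eq_fun do rewrite big_cons.
by move=> x; apply: continuousD; [exact: f_cont | exact: IHr].
Qed.

Lemma continuous_frob2 (T : topologicalType) m n (f : T -> 'M[R]_(m, n)) :
  (forall i j, continuous (fun x => f x i j)) -> continuous (fun x => frob2 (f x)).
Proof.
move=> f_cont; apply: continuous_sum => i; apply: continuous_sum => j.
by under eq_fun do rewrite expr2; move=> x; apply: continuousM; exact: f_cont.
Qed.

Lemma continuous_mulmx_coef m n p (M : 'M[R]_(n, p)) i j :
  continuous (fun X : 'M[R]_(m, n) => (X *m M) i j).
Proof.
under eq_fun do rewrite mxE.
apply: continuous_sum => k X; apply: continuousM; first exact: coord_continuous.
exact: cst_continuous.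
Qed.

Lemma frob2_normalize n (v : 'rV[R]_n) : v != 0 ->
  frob2 ((Num.sqrt (frob2 v))^-1 *: v) = 1.
Proof.
by rewrite -frob2_gt0 => v_neq0; rewrite frob2Z exprVn sqr_sqrtr ?mulVf ?gt_eqF ?ltW.
Qed.

Variables (m n : nat) (P : 'M[R]_(m.+1, n)).

Lemma frob2_mulmx_min : exists2 v0 : 'rV[R]_m.+1,
  frob2 v0 = 1 & forall v : 'rV_m.+1, frob2 (v0 *m P) * frob2 v <= frob2 (v *m P).
Proof.
pose S := [set v : 'rV[R]_m.+1 | frob2 v = 1]%classic.
have S_neq0 : (S !=set0)%classic.
  have one_neq0 : const_mx 1 != 0 :> 'rV[R]_m.+1.
    by apply/eqP => /rowP/(_ ord0); rewrite !mxE => /eqP; rewrite oner_eq0.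
  by exists ((Num.sqrt (frob2 (const_mx 1 : 'rV[R]_m.+1)))^-1 *: const_mx 1);
    rewrite /S /= frob2_normalize.
have S_compact : compact S.
  apply: bounded_closed_compact.
    exists 1; split => // M M_gt1 v /= Sv; apply: le_trans (ltW M_gt1).
    by rewrite -(@ler_sqr _ _ 1) ?nnegrE // expr1n -Sv sqr_mx_normr_le_frob2.
  apply: (@preimage_closed _ _ (@frob2 _ _ _) [set x | x = 1]%classic).
    by move=> v _; apply: continuous_frob2 => i j; exact: coord_continuous.
  exact: closed_eq.
have frob2P_cont :
    {within S, continuous (fun v : 'rV[R]_m.+1 => frob2 (v *m P))}%classic.
  apply: continuous_subspaceT => v.
  by apply: continuous_frob2 => i j; exact: continuous_mulmx_coef.
have [v0 /set_mem S_v0 v0_min] := EVT_min_rV S_neq0 S_compact frob2P_cont.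
exists v0 => // v; have [->|v_neq0] := eqVneq v 0.
  by rewrite frob2_0 mulr0 frob2_ge0.
have := v0_min _ (mem_set (frob2_normalize v_neq0)).
rewrite -scalemxAl frob2Z exprVn sqr_sqrtr ?frob2_ge0 // mulrC.
by rewrite ler_pdivlMr // frob2_gt0.
Qed.

Lemma frob2_min_eigenvector (v0 : 'rV[R]_m.+1) : frob2 v0 = 1 ->
  (forall v : 'rV_m.+1, frob2 (v0 *m P) * frob2 v <= frob2 (v *m P)) ->
  v0 *m (P *m P^T) = frob2 (v0 *m P) *: v0.
Proof.
move=> v0_unit v0_min; set mu := frob2 (v0 *m P).
set Y := v0 *m (P *m P^T) - mu *: v0.
have dotYY : dotr Y Y = dotr (v0 *m P) (Y *m P) - mu * dotr v0 Y.
  by rewrite /Y dotrBl dotrZl mulmxA dotr_mulmx.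
(* Minimality of the Rayleigh quotient at v0 kills the linear term in t of
   |(v0 + t Y) P|^2 - mu |v0 + t Y|^2 >= 0, and that term is 2 t |Y|^2. *)
suff : dotr (v0 *m P) (Y *m P) - mu * dotr v0 Y = 0.
  by rewrite -dotYY -frob2_dotr => /eqP; rewrite frob2_eq0 subr_eq0 => /eqP.
apply: (@quadratic_ge0_lin_eq0 _ _ (frob2 (Y *m P) - mu * frob2 Y)) => t.
have := v0_min (v0 + t *: Y).
by rewrite mulmxDl -scalemxAl !frob2_row_addZ v0_unit -/mu; lra.
Qed.

Lemma rayleigh_eigenvalue : exists2 mu, eigenvalue (P *m P^T) mu &
  forall v : 'rV_m.+1, mu * frob2 v <= frob2 (v *m P).
Proof.
have [v0 v0_unit v0_min] := frob2_mulmx_min.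
exists (frob2 (v0 *m P)) => //; apply/eigenvalueP; exists v0.
  exact: frob2_min_eigenvector.
by rewrite -frob2_eq0 v0_unit oner_eq0.
Qed.

End Rayleigh.

Section SmallestSingularValue.
Variable R : realType.

Lemma frob2_mulmx_ge mu m n p (P : 'M[R]_(n, p)) (X : 'M[R]_(m, n)) :
  (forall v : 'rV_n, mu * frob2 v <= frob2 (v *m P)) ->
  mu * frob2 X <= frob2 (X *m P).
Proof.
move=> row_ge; rewrite frob2_rows (frob2_rows (X *m P)) mulr_sumr.
by apply: ler_sum => i _; rewrite row_mul.
Qed.

Lemma eigenvalue_gram_ge0 n p (P : 'M[R]_(n, p)) mu :
  eigenvalue (P *m P^T) mu -> 0 <= mu.
Proof.
case/eigenvalueP => v v_eig v_neq0.
have : frob2 (v *m P) = mu * frob2 v.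
  by rewrite !frob2_dotr dotr_mulmx -mulmxA v_eig dotrZl.
by rewrite -(pmulr_lge0 _ (_ : 0 < frob2 v)) ?frob2_gt0 // => <-; exact: frob2_ge0.
Qed.

Lemma eigenvalue_mul_trmxC n (M : 'M[R]_n) mu :
  eigenvalue (M *m M^T) mu -> eigenvalue (M^T *m M) mu.
Proof.
case/eigenvalueP => v v_eig v_neq0; apply/eigenvalueP.
have [vM0|vM_neq0] := eqVneq (v *m M) 0; last first.
  by exists (v *m M); rewrite // mulmxA -(mulmxA v) v_eig -scalemxAl.
have mu0 : mu = 0.
  move: v_eig; rewrite mulmxA vM0 mul0mx => /esym/eqP.
  by rewrite scaler_eq0 (negbTE v_neq0) orbF => /eqP.
have /det0P[w w_neq0 wMt] : \det M^T == 0 by rewrite det_tr; apply/det0P; exists v.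
by exists w; rewrite // mulmxA wMt mul0mx mu0 scale0r.
Qed.

Lemma sqr_sigma_min_le n (M : 'M[R]_n) mu :
  eigenvalue (M^T *m M) mu -> sigma_min M ^+ 2 <= mu.
Proof.
move=> mu_eig; rewrite /sigma_min.
set E := [set l | eigenvalue (M^T *m M) l]%classic.
have E_ge0 l : E l -> 0 <= l.
  by move=> l_eig; apply: (@eigenvalue_gram_ge0 _ _ M^T); rewrite trmxK.
have infE_le : inf E <= mu by apply: ge_inf => //; exists 0.
have [infE_ge0|infE_lt0] := leP 0 (inf E); first by rewrite sqr_sqrtr.
by rewrite ler0_sqrtr ?(ltW infE_lt0) // expr0n E_ge0.
Qed.

Lemma sigma_min_mulmx_l n p (C : 'M[R]_n) (X : 'M[R]_(n, p)) :
  sigma_min C ^+ 2 * frob2 X <= frob2 (C *m X).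
Proof.
case: n => [|n] in C X *.
  by rewrite (_ : X = 0) ?mulmx0 ?frob2_0 ?mulr0 //; apply/matrixP => -[].
have [mu mu_eig mu_min] := rayleigh_eigenvalue C^T; rewrite trmxK in mu_eig.
rewrite -(frob2_tr (C *m X)) -(frob2_tr X) trmx_mul.
apply: le_trans (frob2_mulmx_ge _ mu_min).
by rewrite ler_wpM2r ?frob2_ge0 ?sqr_sigma_min_le.
Qed.

Lemma sigma_min_mulmx_r p n (X : 'M[R]_(p, n)) (D : 'M[R]_n) :
  sigma_min D ^+ 2 * frob2 X <= frob2 (X *m D).
Proof.
case: n => [|n] in D X *.
  by rewrite (_ : X = 0) ?mul0mx ?frob2_0 ?mulr0 //; apply/matrixP => i [].
have [mu mu_eig mu_min] := rayleigh_eigenvalue D.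
apply: le_trans (frob2_mulmx_ge _ mu_min).
by rewrite ler_wpM2r ?frob2_ge0 ?sqr_sigma_min_le ?eigenvalue_mul_trmxC.
Qed.

Lemma sigma_min_gt0_unitmx n (M : 'M[R]_n) : 0 < sigma_min M -> M \in unitmx.
Proof.
move=> sigma_gt0; rewrite unitmxE unitfE -det_tr.
apply: contraTneq sigma_gt0 => /eqP/det0P[v v_neq0 vMt].
have : eigenvalue (M^T *m M) 0.
  by apply/eigenvalueP; exists v; rewrite // mulmxA vMt mul0mx scale0r.
by move/sqr_sigma_min_le; rewrite -leNgt; nra.
Qed.

End SmallestSingularValue.

Lemma exprn_bernoulli (R : realFieldType) (x : R) j :
  1 <= x -> 1 + j%:R * (x - 1) <= x ^+ j.
Proof.
move=> x_ge1; elim: j => [|j IHj]; first by rewrite mul0r addr0 expr0.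
rewrite exprS -natr1; have := ler_wpM2l (le_trans ler01 x_ge1) IHj.
have : 0 <= j%:R * (x - 1) * (x - 1) by rewrite !mulr_ge0 ?subr_ge0.
lra.
Qed.

Lemma exists_exprn_ge (R : archiRealFieldType) (x c : R) :
  1 < x -> exists j, c <= x ^+ j.
Proof.
move=> x_gt1; have x1_gt0 : 0 < x - 1 by rewrite subr_gt0.
pose j := Num.Def.archi_bound (`|c| / (x - 1)); exists j.
have : `|c| / (x - 1) < j%:R by apply/archi_boundP/divr_ge0/ltW.
rewrite ltr_pdivrMr // => c_lt; apply: le_trans (exprn_bernoulli j (ltW x_gt1)).
by have := ler_norm c; lra.
Qed.

Lemma iter_contraction_fixed_point (R : realType) (V : completeNormedModType R)
    (T : V -> V) j (q : {nonneg R}) : q%:num < 1 ->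
  (forall x y, `|iter j T x - iter j T y| <= q%:num * `|x - y|) ->
  exists x, T x = x.
Proof.
move=> q_lt1 iterT_lip.
have iterT_contr : is_contraction (totalfun (iter j T) : {fun setT >-> setT}).
  by exists q; split => // -[x y] _; exact: iterT_lip.
have [p _ p_fix] := banach_fixed_point iterT_contr closedT (ex_intro _ 0 I).
exists p; apply: (contraction_fixpoint_unique iterT_contr) => //.
have {}p_fix : p = iter j T p := p_fix.
by change (T p = iter j T (T p)); rewrite -iterSr iterS -p_fix.
Qed.

(* Square matrices are both a normed module and a complete space, but the
   joint structure completeNormedModType is only inferred on an alias. *)
Definition sqmx (R : realType) n := 'M[R]_n.
HB.instance Definition _ (R : realType) n := NormedModule.on (sqmx R n).
HB.instance Definition _ (R : realType) n := Complete.on (sqmx R n).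

Section AbsoluteValueEquation.
Variables (R : realType) (n : nat) (C D G : 'M[R]_n) (k : R).
Hypotheses (k_gt1 : 1 < k) (C_unit : C \in unitmx) (D_unit : D \in unitmx).
Hypothesis frob2_CD : forall Y, k * frob2 Y <= frob2 (C *m Y *m D).

Lemma frob2_le_absmx_gap Z X Y :
  C *m Z *m D = absmx Y - absmx X -> k * frob2 Z <= frob2 (X - Y).
Proof.
move=> CZD; apply: le_trans (frob2_CD Z) _.
by rewrite CZD -[X - Y]opprB frob2N frob2_absmxB.
Qed.

Lemma ave_inj : injective (fun X => C *m X *m D + absmx X).
Proof.
move=> X Y /= eqXY; apply/eqP; rewrite -subr_eq0 -frob2_eq0.
have CD_XY : C *m (X - Y) *m D = absmx Y - absmx X.
  rewrite mulmxBr mulmxBl -[C *m X *m D](addrK (absmx X)) eqXY.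
  by rewrite addrAC [C *m Y *m D + _]addrC addrK.
have : (k - 1) * frob2 (X - Y) <= 0.
  by rewrite mulrBl mul1r subr_le0 frob2_le_absmx_gap.
by rewrite pmulr_rle0 ?subr_gt0 // eq_le frob2_ge0 andbT.
Qed.

Let ave_step X := invmx C *m (G - absmx X) *m invmx D.

Lemma mulmx_ave_step X : C *m ave_step X *m D = G - absmx X.
Proof. by rewrite /ave_step !mulmxA mulmxV // mul1mx mulmxKV. Qed.

Lemma ave_step_fixed X : ave_step X = X -> C *m X *m D + absmx X = G.
Proof. by move=> fixX; rewrite -{1}fixX mulmx_ave_step subrK. Qed.

Lemma frob2_ave_step X Y : k * frob2 (ave_step X - ave_step Y) <= frob2 (X - Y).
Proof.
apply: frob2_le_absmx_gap.
by rewrite mulmxBr mulmxBl !mulmx_ave_step opprB addrC addrA subrK.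
Qed.

Lemma frob2_iter_ave_step j X Y :
  k ^+ j * frob2 (iter j ave_step X - iter j ave_step Y) <= frob2 (X - Y).
Proof.
elim: j => [|j IHj]; first by rewrite expr0 mul1r.
rewrite exprSr -mulrA /=; apply: le_trans IHj; rewrite ler_wpM2l //.
  by rewrite exprn_ge0 // (le_trans ler01) ?ltW.
exact: frob2_ave_step.
Qed.

Lemma iter_ave_step_contraction : exists j, forall X Y : sqmx R n,
  `|iter j ave_step X - iter j ave_step Y| <= 2^-1 * `|X - Y|.
Proof.
(* frob2 and the squared max-entry norm differ by a factor at most n^2,
   which k^j >= 4 n^2 absorbs. *)
have [j kj_ge] := exists_exprn_ge (4 * (n * n)%:R) k_gt1.
exists j => X Y; set K := k ^+ j in kj_ge *; set N : R := (n * n)%:R in kj_ge *.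
set F := frob2 (iter j ave_step X - iter j ave_step Y).
have K_gt0 : 0 < K by rewrite exprn_gt0 // (lt_trans ltr01).
have KF_le : K * F <= N * `|X - Y| ^+ 2.
  exact: le_trans (frob2_iter_ave_step j X Y) (frob2_le_sqr_mx_normr _).
have normF_le : `|iter j ave_step X - iter j ave_step Y| ^+ 2 <= F.
  exact: sqr_mx_normr_le_frob2.
have : K * (4 * F) <= K * `|X - Y| ^+ 2.
  by have := sqr_ge0 `|X - Y|; nra.
rewrite ler_pM2l // => F_le.
rewrite -ler_sqr ?nnegrE ?mulr_ge0 // exprMn.
by have := normr_ge0 (X - Y); lra.
Qed.

Lemma ave_exists : exists X, C *m X *m D + absmx X = G.
Proof.
have [j iter_contr] := iter_ave_step_contraction.
have [X fixX] : exists X : sqmx R n, ave_step X = X.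
  by apply: (iter_contraction_fixed_point (q := (2^-1)%:nng) _ iter_contr) => /=; lra.
by exists X; exact: ave_step_fixed.
Qed.

End AbsoluteValueEquation.

Theorem theorem4p8 (R : realType) (n : nat) (A B K L F : 'M[R]_n)
  (hB : B \in unitmx) (hL : L \in unitmx)
  (h : sigma_min (K *m invmx L) * sigma_min (invmx B *m A) > 1) :
  exists! X : 'M[R]_n, A *m X *m K + B *m absmx X *m L = F.
Proof.
set C := invmx B *m A in h *; set D := K *m invmx L in h *.
pose G := invmx B *m F *m invmx L.
have sigmaC_ge0 : 0 <= sigma_min C := sqrtr_ge0 _.
have sigmaD_ge0 : 0 <= sigma_min D := sqrtr_ge0 _.
have sigmaC_gt0 : 0 < sigma_min C.
  by rewrite lt_def sigmaC_ge0 andbT; apply: contraTneq h => ->; rewrite mulr0 ltr10.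
have sigmaD_gt0 : 0 < sigma_min D.
  by rewrite lt_def sigmaD_ge0 andbT; apply: contraTneq h => ->; rewrite mul0r ltr10.
have k_gt1 : 1 < (sigma_min C * sigma_min D) ^+ 2 by rewrite mulrC (exprn_egt1 2 h).
have frob2_CD Y : (sigma_min C * sigma_min D) ^+ 2 * frob2 Y <= frob2 (C *m Y *m D).
  rewrite exprMn -mulrA -mulmxA; apply: le_trans (sigma_min_mulmx_l C (Y *m D)).
  by rewrite ler_wpM2l ?sqr_ge0 ?sigma_min_mulmx_r.
have reduce X : A *m X *m K + B *m absmx X *m L = F <-> C *m X *m D + absmx X = G.
  have -> : A *m X *m K + B *m absmx X *m L = B *m (C *m X *m D + absmx X) *m L.
    by rewrite mulmxDr mulmxDl !mulmxA mulmxV // mul1mx mulmxKV.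
  rewrite /G; split => [<-|->]; rewrite !mulmxA.
    by rewrite mulVmx // mul1mx mulmxK.
  by rewrite mulmxV // mul1mx mulmxKV.
have [X solX] := ave_exists G k_gt1 (sigma_min_gt0_unitmx sigmaC_gt0)
  (sigma_min_gt0_unitmx sigmaD_gt0) frob2_CD.
exists X; split => [|Y /reduce solY]; first exact/reduce.
by apply: (ave_inj k_gt1 frob2_CD); rewrite /= solX solY.
Qed.
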